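(* Let $0=t_0<\dots<t_N=T$, $\tau_k=t_k-t_{k-1}$, $\tau=\max_k\tau_k$, $r_k=\tau_k/\tau_{k-1}$ ($2\le k\le N$). Let $r_{\max}\approx4.8645$ be the positive root of $x^3=(2x+1)^2$, fix $\delta\in(0,r_{\max})$, assume $r_2>0$ and $0<r_k\le r_{\max}-\delta$ for $3\le k\le N$, and set $c_r=r_{\max}^{5/2}$. Then the DCC kernels satisfy, for $1\le n\le N$, $$p^{(n)}_{n-j}\le c_r\delta^{-1}\sqrt{\tau_j}\sqrt\tau,\qquad 2\le j\le n,$$ $$p^{(n)}_{n-1}\le\tau_1+c_r\delta^{-1}\sqrt{\tau_2}\sqrt\tau.$$
   Context: BDF2 kernels: $b^{(1)}_0=1/\tau_1$; for $n\ge2$, $b^{(n)}_0=\frac{1+2r_n}{\tau_n(1+r_n)}$, $b^{(n)}_1=-\frac{r_n^2}{\tau_n(1+r_n)}$, $b^{(n)}_j=0$ for $2\le j\le n-1$. The discrete complementary convolution (DCC) kernels $p^{(n)}_{n-j}$ ($1\le j\le n$) are defined by $\sum_{j=k}^np^{(n)}_{n-j}b^{(j)}_{j-k}=1$ for all $1\le k\le n$. *)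

From mathcomp Require Import all_boot all_order all_algebra.
From mathcomp Require Import reals.
Set Implicit Arguments. Unset Strict Implicit. Unset Printing Implicit Defensive.
Import Order.TTheory GRing.Theory Num.Theory.
Local Open Scope ring_scope.

Section Defs.
Variable R : realType.
Variable t : nat -> R.

Definition tau (k : nat) : R := t k - t k.-1.

Definition step_ratio (k : nat) : R := tau k / tau k.-1.

Definition tauMax (N : nat) : R := \big[Num.max/0]_(1 <= k < N.+1) tau k.

Definition bdf2 (n j : nat) : R :=
  if n == 1%N then (if j == 0%N then 1 / tau 1 else 0)
  else if j == 0%N then (1 + 2 * step_ratio n) / (tau n * (1 + step_ratio n))
  else if j == 1%N then - (step_ratio n ^+ 2) / (tau n * (1 + step_ratio n))
  else 0.

(* p n m stands for p^{(n)}_m: DCC kernels are characterized by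
   sum_{j=k}^n p^{(n)}_{n-j} b^{(j)}_{j-k} = 1 for all 1 <= k <= n. *)
Definition is_DCC (N : nat) (p : nat -> nat -> R) : Prop :=
  forall n k : nat, (1 <= k)%N -> (k <= n)%N -> (n <= N)%N ->
    \sum_(k <= j < n.+1) p n (n - j)%N * bdf2 j (j - k)%N = 1.
End Defs.
Arguments tau {R} t k.
Arguments step_ratio {R} t k.
Arguments tauMax {R} t N.
Arguments bdf2 {R} t n j.
Arguments is_DCC {R} t N p.

(* Fix n and put w_k := p^(n)_(n-k) b^(k)_0 tau_k.  The BDF2 matrix is lower
   bidiagonal, so the DCC identities form a backward recursion:
   w_n = tau_n and w_k = tau_k + w_(k+1) r_(k+1) / (1 + 2 r_(k+1)), while
   p^(n)_(n-k) = w_k (1 + r_k) / (1 + 2 r_k) <= w_k for k >= 2 and w_1 = p^(n)_(n-1).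
   With C := c_r / delta, the bound w_k <= C sqrt(tau_k) sqrt(tau) propagates
   downwards because sqrt(tau_(k+1)) = sqrt(r_(k+1)) sqrt(tau_k) and
   tau_k <= sqrt(tau_k) sqrt(tau), provided 1 + C r^(3/2) / (1 + 2 r) <= C for
   r = r_(k+1).  That contraction inequality holds because 1 + 2 s^2 - s^3
   vanishes at s = u := sqrt(r_max) (u^3 = 2 u^2 + 1), so it factors as
   (u - s) q(s) with u^5 q(s) >= (u + s)(1 + 2 s^2), and u^2 - s^2 >= delta.
   Finally p^(n)_(n-1) = tau_1 + p^(n)_(n-2) r_2 / (1 + r_2) <= tau_1 + p^(n)_(n-2). *)

From mathcomp Require Import all_boot all_order all_algebra.
From mathcomp Require Import reals.
From mathcomp Require Import ring lra zify.
Import Order.TTheory GRing.Theory Num.Theory.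
Local Open Scope ring_scope.

Section RealInequalities.
Context {R : realType}.
Implicit Types u d s r h q w C S X x : R.

Lemma cubic_gap_bound {u d s} : 0 < u -> u ^+ 3 = 2 * u ^+ 2 + 1 ->
  0 < d -> 0 <= s -> s ^+ 2 <= u ^+ 2 - d ->
  1 + 2 * s ^+ 2 <= u ^+ 5 / d * (1 + 2 * s ^+ 2 - s ^+ 3).
Proof.
move=> u_gt0 u_root d_gt0 s_ge0 s_le.
have u_gt2 : 2 < u by nra.
have s_le_u : s <= u by nra.
have u_cubic : u ^+ 3 - 2 * u ^+ 2 = 1 by rewrite u_root; ring.
have gap_factor : 1 + 2 * s ^+ 2 - s ^+ 3
    = (u - s) * (u ^+ 2 + u * s + s ^+ 2 - 2 * u - 2 * s).
  by transitivity (u ^+ 3 - 2 * u ^+ 2 + 2 * s ^+ 2 - s ^+ 3);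
    [rewrite u_cubic | ring].
have cofactor_bound : (u + s) * (1 + 2 * s ^+ 2)
    <= u ^+ 5 * (u ^+ 2 + u * s + s ^+ 2 - 2 * u - 2 * s).
  have -> : u ^+ 5 * (u ^+ 2 + u * s + s ^+ 2 - 2 * u - 2 * s)
      = u ^+ 4 * (u * s ^+ 2 + u * s * (u - 2) + (u ^+ 3 - 2 * u ^+ 2)) by ring.
  rewrite u_cubic.
  have u4_ge : 2 * (u + s) <= u ^+ 4 by nra.
  have mid_ge0 : 0 <= u ^+ 4 * (u * s * (u - 2)) by apply: mulr_ge0; nra.
  have quad_le : (u + s) * (2 * s ^+ 2) <= u ^+ 4 * (u * s ^+ 2).
    have : 2 * (u + s) <= u ^+ 4 * u by nra.
    have : 0 <= s ^+ 2 by nra.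
    nra.
  nra.
have us_ge0 : 0 <= u - s by lra.
rewrite mulrAC ler_pdivlMr // gap_factor.
have := ler_wpM2l us_ge0 cofactor_bound.
nra.
Qed.

Lemma sqrt_cubic_root x : 0 < x -> x ^+ 3 = (2 * x + 1) ^+ 2 ->
  Num.sqrt x ^+ 3 = 2 * x + 1.
Proof.
move=> x_gt0 x_root; have x_ge0 := ltW x_gt0; apply/eqP.
rewrite -(@eqrXn2 _ 2) ?exprn_ge0 ?sqrtr_ge0 //; last lra.
by rewrite -exprM mulnC exprM sqr_sqrtr // x_root.
Qed.

Lemma cubic_root_contraction x d r : 0 < x -> x ^+ 3 = (2 * x + 1) ^+ 2 ->
  0 < d -> 0 <= r <= x - d ->
  1 + x ^+ 2 * Num.sqrt x / d * (r * Num.sqrt r / (1 + 2 * r))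
    <= x ^+ 2 * Num.sqrt x / d.
Proof.
move=> x_gt0 x_root d_gt0 /andP[r_ge0 r_le].
have u_root : Num.sqrt x ^+ 3 = 2 * Num.sqrt x ^+ 2 + 1.
  by rewrite sqrt_cubic_root // sqr_sqrtr // ltW.
have u_gt0 : 0 < Num.sqrt x by rewrite sqrtr_gt0.
have s_ge0 : 0 <= Num.sqrt r by exact: sqrtr_ge0.
have x_eq : x = Num.sqrt x ^+ 2 by rewrite sqr_sqrtr // ltW.
have r_eq : r = Num.sqrt r ^+ 2 by rewrite sqr_sqrtr.
move: (Num.sqrt x) (Num.sqrt r) x_eq r_eq r_le u_root u_gt0 s_ge0.
move=> u s -> -> s_le u_root u_gt0 s_ge0.
have gap := cubic_gap_bound u_gt0 u_root d_gt0 s_ge0 s_le.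
rewrite -exprM -exprSr -exprSr.
have den_gt0 : 0 < 1 + 2 * s ^+ 2 by nra.
set C := u ^+ 5 / d in gap *.
rewrite -subr_ge0.
have -> : C - (1 + C * (s ^+ 3 / (1 + 2 * s ^+ 2)))
    = (C * (1 + 2 * s ^+ 2 - s ^+ 3) - (1 + 2 * s ^+ 2)) / (1 + 2 * s ^+ 2).
  by field; rewrite gt_eqF.
by rewrite divr_ge0 ?subr_ge0 // ltW.
Qed.

Lemma self_le_sqrt_mul {x S} : 0 <= x -> Num.sqrt x <= S -> x <= Num.sqrt x * S.
Proof.
by move=> x_ge0 le_S; rewrite -{1}[x](sqr_sqrtr x_ge0) expr2 ler_wpM2l ?sqrtr_ge0.
Qed.

Lemma weighted_step_le h r w C S :
  0 < h -> 0 < r -> Num.sqrt h <= S ->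
  1 + C * (r * Num.sqrt r / (1 + 2 * r)) <= C ->
  w <= C * Num.sqrt (r * h) * S ->
  h + w * (r / (1 + 2 * r)) <= C * Num.sqrt h * S.
Proof.
move=> h_gt0 r_gt0 h_le contraction w_le.
rewrite mulrAC in contraction; rewrite (sqrtrM _ (ltW r_gt0)) in w_le.
set k := r / (1 + 2 * r) in contraction *.
have k_ge0 : 0 <= k by apply: divr_ge0; lra.
have S_ge0 : 0 <= S := le_trans (sqrtr_ge0 h) h_le.
have hS_ge0 : 0 <= Num.sqrt h * S by rewrite mulr_ge0 ?sqrtr_ge0.
have h_le_hS := self_le_sqrt_mul (ltW h_gt0) h_le.
have := ler_wpM2r k_ge0 w_le.
have := ler_wpM2l hS_ge0 contraction.
lra.
Qed.

Lemma le_of_weighted_le {q r X} : 0 < r -> 0 <= X ->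
  q * ((1 + 2 * r) / (1 + r)) <= X -> q <= X.
Proof.
move=> r_gt0 X_ge0 weighted_le; have [q_le0|q_gt0] := lerP q 0; first by lra.
apply: le_trans weighted_le.
by rewrite ler_peMr ?(ltW q_gt0) // ler_pdivlMr; lra.
Qed.
End RealInequalities.

Section DCCKernels.
Context {R : realType} {t : nat -> R} {N : nat} {p : nat -> nat -> R}.
Hypothesis tau_gt0 : forall k, (1 <= k <= N)%N -> 0 < tau t k.

Lemma step_ratio_gt0 k : (2 <= k <= N)%N -> 0 < step_ratio t k.
Proof. by move=> k_range; rewrite divr_gt0 ?tau_gt0 //; lia. Qed.

Lemma sqrt_tau_le_max k : (1 <= k <= N)%N ->
  Num.sqrt (tau t k) <= Num.sqrt (tauMax t N).
Proof.
move=> k_range; have le_max : tau t k <= tauMax t N.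
  by apply: (le_bigmax_seq _ k) => //; rewrite mem_index_iota; lia.
by rewrite ler_sqrt // (le_trans (ltW (tau_gt0 _ k_range)) le_max).
Qed.

Lemma bdf2_1_0_tau : (1 <= N)%N -> bdf2 t 1 0 * tau t 1 = 1.
Proof. by move=> N_ge1; rewrite /bdf2 /= mul1r mulVf // gt_eqF ?tau_gt0. Qed.

Lemma bdf2_0_tau k : (2 <= k <= N)%N ->
  bdf2 t k 0 * tau t k = (1 + 2 * step_ratio t k) / (1 + step_ratio t k).
Proof.
move=> k_range; have r_gt0 := step_ratio_gt0 _ k_range.
have tau_neq0 : tau t k != 0 by rewrite gt_eqF ?tau_gt0 //; lia.
rewrite /bdf2 ifF; last by apply/eqP; lia.
by field; rewrite tau_neq0 /=; lra.
Qed.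

Lemma bdf2_1_tau k : (2 <= k <= N)%N ->
  bdf2 t k 1 * tau t k.-1 = - (step_ratio t k / (1 + step_ratio t k)).
Proof.
move=> k_range; have tau_k_gt0 : 0 < tau t k by apply: tau_gt0; lia.
have tau_pred_gt0 : 0 < tau t k.-1 by apply: tau_gt0; lia.
rewrite /bdf2 /step_ratio ifF; last by apply/eqP; lia.
by field; rewrite !gt_eqF // addr_gt0.
Qed.

Hypothesis dcc : is_DCC t N p.

Lemma DCC_diag n : (1 <= n <= N)%N -> p n 0 * bdf2 t n 0 = 1.
Proof.
move=> /andP[n_ge1 n_le_N]; have := dcc n n n_ge1 (leqnn n) n_le_N.
by rewrite big_ltn // big_geq // subnn addr0.
Qed.

Lemma DCC_subdiag n k : (1 <= k < n)%N -> (n <= N)%N ->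
  p n (n - k) * bdf2 t k 0 + p n (n - k.+1) * bdf2 t k.+1 1 = 1.
Proof.
move=> /andP[k_ge1 k_lt_n] n_le_N; have := dcc n k k_ge1 (ltnW k_lt_n) n_le_N.
rewrite big_ltn; last lia.
rewrite big_ltn; last lia.
rewrite subnn subSnn big_nat_cond big1 ?addr0 ?addrA //.
move=> j /andP[/andP[j_ge _] _].
by rewrite /bdf2 !ifF ?mulr0 //; apply/eqP; lia.
Qed.

Let weighted_kernel n k := p n (n - k) * (bdf2 t k 0 * tau t k).

Lemma weighted_kernel_diag n : (1 <= n <= N)%N -> weighted_kernel n n = tau t n.
Proof. by move=> n_range; rewrite /weighted_kernel mulrA subnn DCC_diag ?mul1r. Qed.

Lemma weighted_kernel_step n k : (1 <= k < n)%N -> (n <= N)%N ->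
  weighted_kernel n k = tau t k + p n (n - k.+1) * (step_ratio t k.+1 / (1 + step_ratio t k.+1)).
Proof.
move=> k_range n_le_N.
have row := congr1 ( *%R^~ (tau t k)) (DCC_subdiag _ _ k_range n_le_N).
rewrite /= mul1r mulrDl -!mulrA (bdf2_1_tau k.+1) in row; last lia.
by move/eqP: row; rewrite mulrN subr_eq => /eqP.
Qed.

Lemma kernel_ratio_weight n k : (2 <= k <= N)%N ->
  p n (n - k) * (step_ratio t k / (1 + step_ratio t k))
    = weighted_kernel n k * (step_ratio t k / (1 + 2 * step_ratio t k)).
Proof.
move=> k_range; have r_gt0 := step_ratio_gt0 _ k_range.
by rewrite /weighted_kernel bdf2_0_tau //; field; rewrite !gt_eqF //; lra.
Qed.

Context {C : R}.
Hypothesis C_ge1 : 1 <= C.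
Hypothesis contraction : forall k, (3 <= k <= N)%N ->
  1 + C * (step_ratio t k * Num.sqrt (step_ratio t k) / (1 + 2 * step_ratio t k)) <= C.

Lemma weighted_kernel_le n k : (2 <= k <= n)%N -> (n <= N)%N ->
  weighted_kernel n k <= C * Num.sqrt (tau t k) * Num.sqrt (tauMax t N).
Proof.
move=> /andP[k_ge2 k_le_n] n_le_N.
move Em : (n - k)%N => m; elim: m k Em k_ge2 k_le_n => [|m IH] k Em k_ge2 k_le_n.
  have -> : k = n by lia.
  have n_range : (1 <= n <= N)%N by lia.
  rewrite weighted_kernel_diag //.
  have := self_le_sqrt_mul (ltW (tau_gt0 _ n_range)) (sqrt_tau_le_max _ n_range).
  move/le_trans; apply.
  by rewrite -mulrA ler_peMl // mulr_ge0 ?sqrtr_ge0.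
have tau_k_gt0 : 0 < tau t k by apply: tau_gt0; lia.
rewrite weighted_kernel_step ?kernel_ratio_weight; try lia.
apply: weighted_step_le => //.
- by apply: step_ratio_gt0; lia.
- by apply: sqrt_tau_le_max; lia.
- by apply: contraction; lia.
rewrite /step_ratio /= divfK ?gt_eqF //.
by apply: IH; lia.
Qed.

Let C_ge0 : 0 <= C := le_trans ler01 C_ge1.

Lemma kernel_le n j : (2 <= j <= n)%N -> (n <= N)%N ->
  p n (n - j) <= C * Num.sqrt (tau t j) * Num.sqrt (tauMax t N).
Proof.
move=> j_range n_le_N; have j_range_N : (2 <= j <= N)%N by lia.
apply: (le_of_weighted_le (step_ratio_gt0 _ j_range_N)).
  by rewrite !mulr_ge0 ?sqrtr_ge0 ?C_ge0.
by rewrite -bdf2_0_tau //; apply: weighted_kernel_le.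
Qed.

Lemma first_kernel_le n : (1 <= n <= N)%N ->
  p n (n - 1) <= tau t 1 + C * Num.sqrt (tau t 2) * Num.sqrt (tauMax t N).
Proof.
move=> n_range; set X := C * _ * _.
have X_ge0 : 0 <= X by rewrite !mulr_ge0 ?sqrtr_ge0 ?C_ge0.
have -> : p n (n - 1) = weighted_kernel n 1 by rewrite /weighted_kernel bdf2_1_0_tau ?mulr1 //; lia.
have [n_eq1 | n_gt1] : n = 1%N \/ (1 < n)%N by lia.
  by rewrite n_eq1 weighted_kernel_diag ?lerDl //; lia.
have r_gt0 : 0 < step_ratio t 2 by apply: step_ratio_gt0; lia.
have weight_ge0 : 0 <= step_ratio t 2 / (1 + step_ratio t 2) by apply: divr_ge0; lra.
have weight_le1 : step_ratio t 2 / (1 + step_ratio t 2) <= 1 by rewrite ler_pdivrMr; lra.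
rewrite weighted_kernel_step ?lerD2l; try lia.
apply: le_trans (ler_wpM2r weight_ge0 (kernel_le n 2 _ _)) _; try lia.
by rewrite ler_piMr.
Qed.

End DCCKernels.

Theorem mainTheorem6 (R : realType) (N : nat) (t : nat -> R) (T : R)
    (rmax delta : R) (p : nat -> nat -> R) :
  t 0%N = 0 ->
  (forall k : nat, (1 <= k <= N)%N -> t k.-1 < t k) ->
  t N = T ->
  0 < rmax -> rmax ^+ 3 = (2 * rmax + 1) ^+ 2 ->
  0 < delta -> delta < rmax ->
  ((2 <= N)%N -> 0 < step_ratio t 2) ->
  (forall k : nat, (3 <= k <= N)%N -> 0 < step_ratio t k /\ step_ratio t k <= rmax - delta) ->
  is_DCC t N p ->
  let c_r := rmax ^+ 2 * Num.sqrt rmax in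
  forall n : nat, (1 <= n <= N)%N ->
    (forall j : nat, (2 <= j <= n)%N ->
       p n (n - j)%N <= c_r / delta * Num.sqrt (tau t j) * Num.sqrt (tauMax t N)) /\
    p n (n - 1)%N <= tau t 1 + c_r / delta * Num.sqrt (tau t 2) * Num.sqrt (tauMax t N).
Proof.
move=> _ t_incr _ rmax_gt0 rmax_root delta_gt0 delta_lt_rmax _ ratio_le dcc c_r n n_range.
have tau_gt0 k : (1 <= k <= N)%N -> 0 < tau t k.
  by move=> /t_incr; rewrite subr_gt0.
have C_ge1 : 1 <= c_r / delta.
  have := @cubic_root_contraction _ rmax delta 0 rmax_gt0 rmax_root delta_gt0.
  by rewrite !mul0r mulr0 addr0 lexx subr_ge0 ltW //; apply.
have contraction k : (3 <= k <= N)%N -> 1 + c_r / delta *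
    (step_ratio t k * Num.sqrt (step_ratio t k) / (1 + 2 * step_ratio t k)) <= c_r / delta.
  by case/ratio_le => r_gt0 r_le; apply: cubic_root_contraction; rewrite // ltW.
have kernel_bound := kernel_le tau_gt0 dcc C_ge1 contraction n.
have first_kernel_bound := first_kernel_le tau_gt0 dcc C_ge1 contraction n n_range.
split=> // j j_range; apply: kernel_bound j_range _.
by case/andP: n_range.
Qed.
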